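(* Let $G$ be a compact connected Lie group with Lie algebra $\mathfrak g$, let $\langle\cdot,\cdot\rangle$ be an $\mathrm{Ad}_G$-invariant scalar product on $\mathfrak g$ (used to identify $\mathfrak g^*\cong\mathfrak g$), let $\mathbb I:\mathfrak g\to\mathfrak g$ be a symmetric positive definite operator, let $k\ge 1$, and let $\epsilon\neq 0$ be a real parameter. On the open subset of $\mathfrak g^{k+1}(m,e_1,\dots,e_k)$ where $e_1,\dots,e_k$ are linearly independent, consider the system $$\dot m=[m,\omega]+\sum_{i=1}^k\lambda^i e_i,\qquad m=\mathbb I\omega,\qquad \dot e_i=\epsilon[e_i,\omega],\quad i=1,\dots,k,$$ where $\lambda^i=-\sum_{j=1}^k\langle e_j,\mathbb I^{-1}[m,\omega]\rangle\,\mathbb A^{ij}$, with $(\mathbb A^{ij})$ the inverse of the matrix $\mathbb A_{ij}=\langle e_i,\mathbb I^{-1}e_j\rangle$, $i,j=1,\dots,k$. Then this system has the invariant measure $$\mu_\epsilon\,\mathrm dm\wedge\mathrm de_1\wedge\cdots\wedge\mathrm de_k,\qquad\text{equivalently}\qquad \mu_\epsilon\,\mathrm d\omega\wedge\mathrm de_1\wedge\cdots\wedge\mathrm de_k,$$ with density $\mu_\epsilon=\Delta^{\frac{1}{2\epsilon}}$, where $\Delta=\det(\langle\mathbb I^{-1}e_i,e_j\rangle)_{i,j=1}^k$.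
   Context: $\mathrm dm,\mathrm d\omega,\mathrm de_i$ denote the standard (Lebesgue) volume forms on $\mathfrak g$ with respect to the metric $\langle\cdot,\cdot\rangle$. The multipliers $\lambda^i$ are exactly those for which the functions $\langle\omega,e_i\rangle$ are conserved along trajectories. This system is called the $\epsilon$LR system. *)

From HB Require Import structures.
From mathcomp Require Import all_boot all_order all_algebra.
From mathcomp Require Import all_classical all_reals all_analysis.
Set Implicit Arguments. Unset Strict Implicit. Unset Printing Implicit Defensive.
Import Order.TTheory GRing.Theory Num.Theory.
Import numFieldNormedType.Exports.
Local Open Scope ring_scope.

(* The Lie algebra g is identified (via a basis) with row vectors 'rV[R]_n.
   The bracket is given by structure constants c i j l : [x,y]_l = sum x_i y_j c_ij^l. *)
Definition lie_br {R : realType} {n : nat} (c : 'I_n -> 'I_n -> 'I_n -> R)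
  (x y : 'rV[R]_n) : 'rV[R]_n :=
  \row_l \sum_i \sum_j x 0 i * y 0 j * c i j l.

Definition ip {R : realType} {n : nat} (B : 'M[R]_n) (x y : 'rV[R]_n) : R :=
  (x *m B *m y^T) 0 0.

(* The phase point (m, e_1, ..., e_k) is a (k+1) x n matrix: row 0 is m,
   row (lift ord0 i) is e_(i+1). *)
Definition mpart {R : realType} {n k : nat} (X : 'M[R]_(k.+1, n)) : 'rV[R]_n :=
  row ord0 X.
Definition epart {R : realType} {n k : nat} (X : 'M[R]_(k.+1, n)) (i : 'I_k)
  : 'rV[R]_n := row (lift ord0 i) X.

(* The operator II acts on row vectors by x |-> x *m II. *)
Definition eLR_field {R : realType} {n k : nat} (c : 'I_n -> 'I_n -> 'I_n -> R)
  (B II : 'M[R]_n) (eps : R) (X : 'M[R]_(k.+1, n)) : 'M[R]_(k.+1, n) :=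
  let m := mpart X in
  let e := epart X in
  let Iinv := invmx II in
  let w := m *m Iinv in
  let bmw := lie_br c m w in
  let A := \matrix_(i < k, j < k) ip B (e i) (e j *m Iinv) in
  let Ainv := invmx A in
  let lam (i : 'I_k) := - \sum_(j < k) ip B (e j) (bmw *m Iinv) * Ainv i j in
  let mdot := bmw + \sum_(i < k) lam i *: e i in
  \matrix_(p, q) (match unlift ord0 p with
                  | Some i => (eps *: lie_br c (e i) w) 0 q
                  | None => mdot 0 q
                  end).

Definition eLR_Delta {R : realType} {n k : nat} (B II : 'M[R]_n)
  (X : 'M[R]_(k.+1, n)) : R :=
  \det (\matrix_(i < k, j < k) ip B (epart X i *m invmx II) (epart X j)).

Definition eLR_domain {R : realType} {n k : nat} (X : 'M[R]_(k.+1, n)) : bool :=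
  row_free (\matrix_(i < k, j < n) X (lift ord0 i) j).

(* Divergence with respect to the (constant multiple of) Lebesgue volume
   on the coordinates of the phase space. *)
Definition divergence {R : realType} {p q : nat}
  (F : 'M[R]_(p, q) -> 'M[R]_(p, q)) (X : 'M[R]_(p, q)) : R :=
  \sum_(a < p) \sum_(b < q) 'D_(delta_mx a b) (fun Y => F Y a b) X.

(* mu dX is an invariant measure of the vector field F on the open set U:
   mu F is differentiable on U and satisfies the Liouville equation
   div (mu F) = 0 there. *)
Definition invariant_density {R : realType} {p q : nat}
  (U : set 'M[R]_(p, q)) (mu : 'M[R]_(p, q) -> R)
  (F : 'M[R]_(p, q) -> 'M[R]_(p, q)) : Prop :=
  forall X, U X ->
    differentiable (fun Y => mu Y *: F Y) X /\
    divergence (fun Y => mu Y *: F Y) X = 0.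

(* By Liouville's formula, div (mu F) = mu div F + dmu (F).  Differentiating
   the field, the terms [x, omega] and [m, I^-1 x] are traceless in x, because
   Ad-invariance of the scalar product makes every ad_w skew and I^-1 is
   symmetric.  What remains of div F comes from the multipliers:
   div F = - sum_ij A^ij <e_j, I^-1 [e_i, omega]>, after dropping
   sum_ij A^ij <e_j, I^-1 [m, I^-1 e_i]>, which pairs the symmetric matrix A^-1
   with an antisymmetric one.  On the other hand de_i = eps [e_i, omega] gives,
   by Jacobi's formula, dDelta (F) = Delta tr (A^-1 dA (F))
   = 2 eps Delta sum_ij A^ij <e_j, I^-1 [e_i, omega]>, so for
   mu = Delta^(1/(2 eps)) the two contributions cancel.  Delta > 0 on the domain
   since A is the Gram matrix of independent vectors for the positive form
   <., I^-1 .>. *)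

From HB Require Import structures.
From mathcomp Require Import all_boot all_order all_algebra.
From mathcomp Require Import all_classical all_reals all_analysis.
From mathcomp Require Import perm ring lra.
Import Order.TTheory GRing.Theory Num.Theory.
Import numFieldNormedType.Exports.
Local Open Scope ring_scope.

Set Implicit Arguments. Unset Strict Implicit. Unset Printing Implicit Defensive.

Section ScalarDifferential.
Context {R : realType} {V : normedModType R}.
Variable x : V.

Lemma is_diff_ext (f g df dg : V -> R) :
  (forall y, f y = g y) -> (forall v, df v = dg v) ->
  is_diff x f df -> is_diff x g dg.
Proof. by move=> /funext <- /funext <-. Qed.

Lemma is_diff_eq0_near (e : V -> R) :
  (\forall y \near x, e y = 0) -> is_diff x e (fun _ => 0).
Proof.
move=> e0.
have ex0 : e x = 0 by apply: (nbhs_singleton e0).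
have e_littleo : e \o shift x = cst (e x) + \0 +o_ 0 id.
  apply/eqaddoP => eps eps0; rewrite ex0.
  have : \forall h \near (0 : V), e (h + x) = 0.
    by rewrite (near_shift x); apply: filterS e0 => z; rewrite /= sub0r subrK.
  apply: filterS => h /= eh.
  have -> : (e \o shift x - (cst 0 + \0)) h = 0 by rewrite !fctE /= eh addr0 subr0.
  by rewrite normr0 mulr_ge0 // ltW.
have de0 : 'd e x = \0 :> (V -> R).
  by apply: diff_unique => //; exact: cst_continuous.
apply: DiffDef => //.
by apply/diff_locallyP; rewrite de0; split => //; exact: cst_continuous.
Unshelve. all: by end_near. Qed.

Lemma is_diff_near_eq (f g df : V -> R) :
  is_diff x f df -> (\forall y \near x, f y = g y) -> is_diff x g df.
Proof.
move=> dfx fg.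
have : is_diff x (fun y => g y - f y) (fun _ => 0).
  by apply: is_diff_eq0_near; apply: filterS fg => y ->; exact: subrr.
move/(is_diffD dfx); apply: is_diff_ext => [y|v]; rewrite !fctE ?addr0 //.
by rewrite addrC subrK.
Qed.

Lemma is_diff_unique (f df dg : V -> R) :
  is_diff x f df -> is_diff x f dg -> df = dg.
Proof.
by move=> dfx dgx; rewrite -(@diff_val _ _ _ _ _ _ _ dfx) -(@diff_val _ _ _ _ _ _ _ dgx).
Qed.

Lemma is_diff_derive (f df : V -> R) v : is_diff x f df -> 'D_v f x = df v.
Proof. by move=> dfx; rewrite deriveE // diff_val. Qed.

(* Pointwise forms of the library rules, which unify with lambda-terms. *)
Lemma is_diff_cstp (a : R) : is_diff x (fun _ => a) (fun _ => 0).
Proof. exact: is_diff_cst. Qed.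

Lemma is_diffDp (f g df dg : V -> R) : is_diff x f df -> is_diff x g dg ->
  is_diff x (fun y => f y + g y) (fun v => df v + dg v).
Proof. exact: is_diffD. Qed.

Lemma is_diffNp (f df : V -> R) : is_diff x f df ->
  is_diff x (fun y => - f y) (fun v => - df v).
Proof. exact: is_diffN. Qed.

Lemma is_diffMp (f g df dg : V -> R) : is_diff x f df -> is_diff x g dg ->
  is_diff x (fun y => f y * g y) (fun v => f x * dg v + g x * df v).
Proof. exact: is_diffM. Qed.

Lemma is_diffVp (f df : V -> R) : is_diff x f df -> f x != 0 ->
  is_diff x (fun y => (f y)^-1) (fun v => - (f x) ^- 2 * df v).
Proof.
move=> dfx fx0; apply: DiffDef; first exact: differentiableV.
by rewrite diffV // (@diff_val _ _ _ _ _ _ _ dfx).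
Qed.

Lemma is_diff_sum (I : Type) (r : seq I) (P : pred I) (f df : I -> V -> R) :
  (forall i, P i -> is_diff x (f i) (df i)) ->
  is_diff x (fun y => \sum_(i <- r | P i) f i y)
            (fun v => \sum_(i <- r | P i) df i v).
Proof.
move=> dfx; elim: r => [|a r IH].
  by apply: is_diff_ext (is_diff_cstp 0) => [y|v]; rewrite big_nil.
case Pa: (P a); last by apply: is_diff_ext IH => [y|v]; rewrite big_cons Pa.
by apply: is_diff_ext (is_diffDp (dfx a Pa) IH) => [y|v]; rewrite big_cons Pa.
Qed.

Lemma is_diff_prod m (f df : 'I_m -> V -> R) :
  (forall i, is_diff x (f i) (df i)) ->
  is_diff x (fun y => \prod_(i < m) f i y)
    (fun v => \sum_(i < m) \prod_(j < m) (if j == i then df j v else f j x)).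
Proof.
elim: m f df => [|m IH] f df dfx.
  by apply: is_diff_ext (is_diff_cstp 1) => [y|v]; rewrite ?big_ord0.
set w := widen_ord (leqnSn m).
have := is_diffMp (IH (f \o w) (df \o w) (fun i => dfx _)) (dfx ord_max).
apply: is_diff_ext => [y|v]; first by rewrite big_ord_recr.
have neq_w_max (j : 'I_m) : (w j == ord_max) = false.
  by apply/negbTE; rewrite -val_eqE /= neq_ltn ltn_ord.
rewrite [RHS]big_ord_recr /= addrC; congr (_ + _).
  rewrite big_ord_recr /= eqxx; congr (_ * _).
  by apply: eq_bigr => j _; rewrite neq_w_max.
rewrite mulrC big_distrl /=; apply: eq_bigr => i _.
by rewrite big_ord_recr /= eq_sym neq_w_max.
Qed.

Lemma is_diff_powR (s ds : V -> R) (r : R) : is_diff x s ds -> 0 < s x ->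
  is_diff x (fun y => s y `^ r) (fun v => r * s x `^ (r - 1) * ds v).
Proof.
move=> dsx sx0.
have sx_itv : s x \in `]0, +oo[%R by rewrite in_itv /= andbT.
have dpow : is_diff (s x) (fun a : R => a `^ r) (fun h => h * (r * s x `^ (r - 1))).
  apply: DiffDef; first by apply/derivable1_diffP; exact: derivable_powR.
  by rewrite diff1E; [apply/funext => h; rewrite (powR_derive1 r sx_itv)|
    apply/derivable1_diffP; exact: derivable_powR].
by apply: is_diff_ext (is_diff_comp dsx dpow) => // v /=; rewrite mulrC.
Qed.

End ScalarDifferential.

Section MatrixDifferential.
Context {R : realType} {p q : nat}.
Local Notation V := 'M[R]_(p, q).
Variable x : V.

Definition mx_is_diff a b (f df : V -> 'M[R]_(a, b)) :=
  forall i j, is_diff x (fun y => f y i j) (fun v => df v i j).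

Lemma mx_is_diff_ext a b (f g df dg : V -> 'M[R]_(a, b)) :
  (forall y, f y = g y) -> (forall v, df v = dg v) ->
  mx_is_diff f df -> mx_is_diff g dg.
Proof. by move=> /funext <- /funext <-. Qed.

Lemma mx_is_diff_mx a b (g dg : 'I_a -> 'I_b -> V -> R) :
  (forall i j, is_diff x (g i j) (dg i j)) ->
  mx_is_diff (fun y => \matrix_(i, j) g i j y) (fun v => \matrix_(i, j) dg i j v).
Proof. by move=> dgx i j; apply: is_diff_ext (dgx i j) => [y|v]; rewrite mxE. Qed.

Lemma mx_is_diff_id : mx_is_diff id id.
Proof.
move=> i j.
have @entry : {linear V -> R}.
  by exists (fun N : V => N i j); do 2![eexists]; do ?[constructor];
     rewrite ?mxE// => ? *; rewrite ?mxE//; move=> ?; rewrite !mxE.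
rewrite (_ : (fun _ => _) = entry) //; apply: DiffDef.
  exact: differentiable_coord.
by rewrite diff_lin //; exact: coord_continuous.
Qed.

Lemma mx_is_diff_cst a b (C : 'M[R]_(a, b)) : mx_is_diff (fun _ => C) (fun _ => 0).
Proof.
by move=> i j; apply: is_diff_ext (is_diff_cstp x (C i j)) => // v; rewrite mxE.
Qed.

Lemma mx_is_diffD a b (f g df dg : V -> 'M[R]_(a, b)) :
  mx_is_diff f df -> mx_is_diff g dg ->
  mx_is_diff (fun y => f y + g y) (fun v => df v + dg v).
Proof.
move=> dfx dgx i j.
by apply: is_diff_ext (is_diffDp (dfx i j) (dgx i j)) => [y|v]; rewrite mxE.
Qed.

Lemma mx_is_diffZ a b (s ds : V -> R) (f df : V -> 'M[R]_(a, b)) :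
  is_diff x s ds -> mx_is_diff f df ->
  mx_is_diff (fun y => s y *: f y) (fun v => s x *: df v + ds v *: f x).
Proof.
move=> dsx dfx i j; apply: is_diff_ext (is_diffMp dsx (dfx i j)) => [y|v];
  by rewrite !mxE // [f x i j * _]mulrC.
Qed.

Lemma mx_is_diff_sum a b (I : Type) (r : seq I) (P : pred I)
    (f df : I -> V -> 'M[R]_(a, b)) :
  (forall i, P i -> mx_is_diff (f i) (df i)) ->
  mx_is_diff (fun y => \sum_(i <- r | P i) f i y) (fun v => \sum_(i <- r | P i) df i v).
Proof.
move=> dfx i j.
apply: is_diff_ext (is_diff_sum r (f := fun l y => f l y i j)
  (df := fun l v => df l v i j) (fun l Pl => dfx l Pl i j)) => [y|v];
  by rewrite summxE.
Qed.

Lemma mx_is_diffM a b c (f df : V -> 'M[R]_(a, b)) (g dg : V -> 'M[R]_(b, c)) :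
  mx_is_diff f df -> mx_is_diff g dg ->
  mx_is_diff (fun y => f y *m g y) (fun v => df v *m g x + f x *m dg v).
Proof.
move=> dfx dgx i j.
have := is_diff_sum (index_enum 'I_b) (P := xpredT)
  (f := fun l y => f y i l * g y l j)
  (df := fun l v => f x i l * dg v l j + g x l j * df v i l)
  (fun l _ => is_diffMp (dfx i l) (dgx l j)).
apply: is_diff_ext => [y|v]; rewrite !mxE //.
by rewrite big_split /= addrC; congr (_ + _); apply: eq_bigr => l _; rewrite mulrC.
Qed.

Lemma mx_is_diff_mulmxr a b c (f df : V -> 'M[R]_(a, b)) (C : 'M[R]_(b, c)) :
  mx_is_diff f df -> mx_is_diff (fun y => f y *m C) (fun v => df v *m C).
Proof.
move=> dfx; apply: mx_is_diff_ext (mx_is_diffM dfx (mx_is_diff_cst C)) => // v.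
by rewrite mulmx0 addr0.
Qed.

Lemma mx_is_diff_tr a b (f df : V -> 'M[R]_(a, b)) : mx_is_diff f df ->
  mx_is_diff (fun y => (f y)^T) (fun v => (df v)^T).
Proof. by move=> dfx i j; apply: is_diff_ext (dfx j i) => [y|v]; rewrite mxE. Qed.

Lemma mx_is_diff_row a b (f df : V -> 'M[R]_(a, b)) k : mx_is_diff f df ->
  mx_is_diff (fun y => row k (f y)) (fun v => row k (df v)).
Proof. by move=> dfx i j; apply: is_diff_ext (dfx k j) => [y|v]; rewrite mxE. Qed.

Lemma mx_is_diff_minor n (f df : V -> 'M[R]_n.+1) (i j : 'I_n.+1) :
  mx_is_diff f df ->
  mx_is_diff (fun y => row' i (col' j (f y))) (fun v => row' i (col' j (df v))).
Proof. by move=> dfx a b; apply: is_diff_ext (dfx _ _) => [y|v]; rewrite !mxE. Qed.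

Lemma is_diff_det n (f df : V -> 'M[R]_n) : mx_is_diff f df ->
  is_diff x (fun y => \det (f y))
    (fun v => \sum_i \sum_j df v i j * cofactor (f x) i j).
Proof.
move=> dfx.
have := is_diff_sum (index_enum 'S_n) (P := xpredT)
  (f := fun (s : 'S_n) y => (-1) ^+ s * \prod_i f y i (s i))
  (df := fun (s : 'S_n) v => (-1) ^+ s *
     (\sum_i \prod_j (if j == i then df v j (s j) else f x j (s j)))
     + (\prod_i f x i (s i)) * 0)
  (fun s _ => is_diffMp (is_diff_cstp x _) (is_diff_prod (f := fun i y => f y i (s i))
      (df := fun i v => df v i (s i)) (fun i => dfx i (s i)))).
apply: is_diff_ext => // v.
under eq_bigr do rewrite mulr0 addr0 big_distrr.
rewrite exchange_big /=; apply: eq_bigr => i _.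
pose N := \matrix_(j, l) (if j == i then df v j l else f x j l).
transitivity (\det N).
  by apply: eq_bigr => s _; congr (_ * _); apply: eq_bigr => j _; rewrite mxE.
rewrite (expand_det_row N i); apply: eq_bigr => l _; rewrite mxE eqxx; congr (_ * _).
rewrite /cofactor; congr (_ * \det _); apply/matrixP => a b.
by rewrite !mxE eq_sym (negbTE (neq_lift i a)).
Qed.

Lemma near_unitmx n (f df : V -> 'M[R]_n) : mx_is_diff f df -> f x \in unitmx ->
  \forall y \near x, f y \in unitmx.
Proof.
move=> dfx fxu.
have ddet : differentiable (fun y => \det (f y)) x.
  by case: (is_diff_det dfx).
have detx0 : \det (f x) != 0 by rewrite -unitfE -unitmxE.
have near_det_neq0 : \forall y \near x, \det (f y) != 0.
  exact: (@cvgr_neq0 R R _ (nbhs x) _ _ _ (differentiable_continuous ddet) detx0).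
by apply: filterS near_det_neq0 => y; rewrite unitmxE unitfE.
Qed.

(* Near [x] the entries of [invmx] are cofactors divided by the determinant;
   differentiating [f *m invmx f = 1] then identifies the derivative below. *)
Lemma ex_mx_is_diff_inv n (f df : V -> 'M[R]_n) : mx_is_diff f df ->
  f x \in unitmx -> exists D, mx_is_diff (fun y => invmx (f y)) D.
Proof.
case: n f df => [|n] f df dfx fxu; first by exists (fun _ => 0) => -[].
have detx0 : \det (f x) != 0 by rewrite -unitfE -unitmxE.
exists (fun v => \matrix_(i, j)
  (- (\det (f x)) ^- 2 * (\sum_a \sum_b df v a b * cofactor (f x) a b)
     * cofactor (f x) j i
   + (\det (f x))^-1 * ((-1) ^+ (j + i) * \sum_a \sum_b
       row' j (col' i (df v)) a b * cofactor (row' j (col' i (f x))) a b))).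
move=> i j; apply: (is_diff_near_eq (f := fun y => (\det (f y))^-1 *
  ((-1) ^+ (j + i) * \det (row' j (col' i (f y)))))).
  apply: is_diff_ext (is_diffMp (is_diffVp (is_diff_det dfx) detx0)
    (is_diffMp (is_diff_cstp x ((-1) ^+ (j + i)))
               (is_diff_det (mx_is_diff_minor j i dfx)))) => // v.
  by rewrite mxE /cofactor; ring.
have near_fu := near_unitmx dfx fxu.
by apply: filterS near_fu => y fyu; rewrite /invmx fyu !mxE /cofactor.
Qed.

Lemma mx_is_diff_inv n (f df : V -> 'M[R]_n) : mx_is_diff f df -> f x \in unitmx ->
  mx_is_diff (fun y => invmx (f y)) (fun v => - (invmx (f x) *m df v *m invmx (f x))).
Proof.
move=> dfx fxu; have [D dinv] := ex_mx_is_diff_inv dfx fxu.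
have D_inv_eq v : df v *m invmx (f x) + f x *m D v = 0.
  apply/matrixP => i j; rewrite [RHS]mxE.
  have : is_diff x (fun y => (f y *m invmx (f y)) i j) (fun _ => 0).
    apply: is_diff_near_eq (is_diff_cstp x ((1%:M : 'M[R]_n) i j)) _.
    have near_fu := near_unitmx dfx fxu.
    by apply: filterS near_fu => y fyu; rewrite mulmxV.
  by move/(is_diff_unique (mx_is_diffM dfx dinv i j))/(congr1 (fun F => F v)).
apply: mx_is_diff_ext dinv => // v.
have := congr1 (mulmx (invmx (f x))) (D_inv_eq v).
rewrite mulmxDr mulmxA mulmxA mulVmx // mul1mx mulmx0 => /eqP.
by rewrite addrC addr_eq0 => /eqP.
Qed.

Definition lin_trace (L : V -> V) : R := \sum_a \sum_b L (delta_mx a b) a b.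

Lemma is_diff_lin_sum (f df : V -> R) (w : V) : is_diff x f df ->
  df w = \sum_a \sum_b w a b * df (delta_mx a b).
Proof.
move=> dfx; rewrite -(@diff_val _ _ _ _ _ _ _ dfx) {1}(matrix_sum_delta w) linear_sum.
by apply: eq_bigr => a _; rewrite linear_sum; apply: eq_bigr => b _; rewrite linearZ.
Qed.

Lemma differentiable_mx (F dF : V -> V) : mx_is_diff F dF -> differentiable F x.
Proof.
move=> dFx.
have -> : F = \sum_a \sum_b (fun Y => F Y a b *: delta_mx a b).
  apply/funext => Y; rewrite fct_sumE {1}(matrix_sum_delta (F Y)).
  by apply: eq_bigr => a _; rewrite fct_sumE.
apply: differentiable_sum => a; apply: differentiable_sum => b.
by apply: differentiableZl; case: (dFx a b).
Qed.

Lemma divergenceZ (mu dmu : V -> R) (F dF : V -> V) :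
  is_diff x mu dmu -> mx_is_diff F dF ->
  divergence (fun Y => mu Y *: F Y) x = mu x * lin_trace dF + dmu (F x).
Proof.
move=> dmux dFx; have dGx := mx_is_diffZ dmux dFx.
rewrite /divergence (is_diff_lin_sum _ dmux) /lin_trace big_distrr -big_split.
apply: eq_bigr => a _ /=; rewrite big_distrr -big_split; apply: eq_bigr => b _ /=.
by rewrite (is_diff_derive _ (dGx a b)) !mxE [dmu _ * _]mulrC.
Qed.

End MatrixDifferential.

Section RealMatrix.
Variables (R : realType) (n : nat).

Lemma form_delta (M : 'M[R]_n) i j :
  ((delta_mx 0 i : 'rV[R]_n) *m M *m (delta_mx 0 j : 'rV[R]_n)^T) 0 0 = M i j.
Proof. by rewrite -rowE trmx_delta -colE !mxE. Qed.

Lemma mx_form_inj (P Q : 'M[R]_n) :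
  (forall x z : 'rV[R]_n, (x *m P *m z^T) 0 0 = (x *m Q *m z^T) 0 0) -> P = Q.
Proof. by move=> PQ; apply/matrixP => i j; rewrite -!form_delta PQ. Qed.


Lemma cofactor_invmx (A : 'M[R]_n) i j : A \in unitmx ->
  cofactor A i j = \det A * invmx A j i.
Proof.
move=> Au; rewrite /invmx Au mxE mulrA mulfV ?mul1r ?mxE //.
by rewrite -unitfE -unitmxE.
Qed.

Lemma mulmx_tr_self_gt0 (z : 'rV[R]_n) : z != 0 -> 0 < (z *m z^T) 0 0.
Proof.
move=> z0; have sq_ge0 i : 0 <= z 0 i * z^T i 0 by rewrite mxE -expr2 sqr_ge0.
rewrite mxE lt_def sumr_ge0 // andbT; apply: contra z0 => /eqP z2_0.
apply/eqP/rowP => i; rewrite mxE.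
move: (psumr_eq0P (fun i _ => sq_ge0 i) z2_0 (i := i) isT).
by rewrite mxE -expr2 => /eqP; rewrite sqrf_eq0 => /eqP.
Qed.

Definition posdef (N : 'M[R]_n) :=
  forall z : 'rV[R]_n, z != 0 -> 0 < (z *m N *m z^T) 0 0.

Lemma posdef_unitmx (N : 'M[R]_n) : posdef N -> N \in unitmx.
Proof.
move=> Npos; rewrite -row_free_unit; apply: inj_row_free => z zN0.
by apply/eqP; apply: contraT => /Npos; rewrite zN0 mul0mx mxE ltxx.
Qed.

(* Along t |-> (1 - t) 1 + t N the matrices stay positive definite, so the
   determinant, a polynomial in t equal to 1 at t = 0, has no zero on [0, 1]. *)
Lemma posdef_det_gt0 (N : 'M[R]_n) : posdef N -> 0 < \det N.
Proof.
move=> Npos.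
pose Np : 'M[{poly R}]_n := \matrix_(i, j)
  (((1%:M : 'M[R]_n) i j)%:P + 'X * (N i j - (1%:M : 'M[R]_n) i j)%:P).
have NpE t : (\det Np).[t] = \det ((1 - t) *: 1%:M + t *: N).
  rewrite -horner_evalE -det_map_mx; congr (\det _); apply/matrixP => i j.
  by rewrite !mxE [LHS]horner_evalE !hornerE; ring.
have Np_neq0 t : 0 <= t <= 1 -> (\det Np).[t] != 0.
  move=> /andP[t0 t1]; rewrite NpE -unitfE -unitmxE; apply: posdef_unitmx => z z0.
  rewrite mulmxDr mulmxDl -!scalemxAr -!scalemxAl mulmx1.
  have := mulmx_tr_self_gt0 z0; have := Npos z z0.
  move: (z *m N *m z^T) (z *m z^T) => P Q; rewrite !mxE.
  move: (P 0 0) (Q 0 0) => a b a0 b0.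
  have [t_gt0|t_le0] := ltrP 0 t.
    by apply: ltr_pwDr; [apply: mulr_gt0|apply: mulr_ge0; lra].
  have -> : t = 0 by lra.
  by rewrite subr0 mul1r mul0r addr0.
have Np0 : (\det Np).[0] = 1 by rewrite NpE subr0 scale1r scale0r addr0 det1.
have Np1 : (\det Np).[1] = \det N by rewrite NpE subrr scale0r scale1r add0r.
rewrite -Np1 ltNge; apply/negP => Np1_le0.
have [t t01 Npt] : exists2 t, t \in `[0, 1] & (\det Np).[t] = 0.
  apply: IVT => //; first exact/continuous_subspaceT/continuous_horner.
  by rewrite Np0 (min_idPr _) ?(max_idPl _) ?Np1_le0 //; lra.
by move: t01; rewrite in_itv /= => /Np_neq0; rewrite Npt eqxx.
Qed.

End RealMatrix.

Section LieAlgebra.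
Variables (R : realType) (n : nat) (c : 'I_n -> 'I_n -> 'I_n -> R) (B : 'M[R]_n).
Hypothesis Hanti : forall x y : 'rV[R]_n, lie_br c y x = - lie_br c x y.
Hypothesis HBsym : B^T = B.
Hypothesis HBpos : forall x : 'rV[R]_n, x != 0 -> 0 < ip B x x.
Hypothesis HBinv : forall x y z : 'rV[R]_n,
  ip B (lie_br c x y) z = ip B x (lie_br c y z).

Definition adr (w : 'rV[R]_n) : 'M[R]_n := \matrix_(i, l) \sum_j w 0 j * c i j l.
Definition adl (m : 'rV[R]_n) : 'M[R]_n := \matrix_(j, l) \sum_i m 0 i * c i j l.

Lemma lie_brE x w : lie_br c x w = x *m adr w.
Proof.
apply/rowP => l; rewrite !mxE; apply: eq_bigr => i _; rewrite mxE big_distrr.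
by apply: eq_bigr => j _ /=; rewrite mulrA.
Qed.

Lemma lie_brEr m y : lie_br c m y = y *m adl m.
Proof.
apply/rowP => l; rewrite !mxE exchange_big; apply: eq_bigr => j _.
by rewrite mxE big_distrr; apply: eq_bigr => i _ /=; rewrite mulrCA mulrA.
Qed.

Lemma lieZl a x w : lie_br c (a *: x) w = a *: lie_br c x w.
Proof. by rewrite !lie_brE scalemxAl. Qed.

Lemma lieZr a m x : lie_br c m (a *: x) = a *: lie_br c m x.
Proof. by rewrite !lie_brEr scalemxAl. Qed.

Lemma lie_suml I (r : seq I) (P : pred I) (F : I -> 'rV[R]_n) w :
  lie_br c (\sum_(i <- r | P i) F i) w = \sum_(i <- r | P i) lie_br c (F i) w.
Proof. by rewrite lie_brE mulmx_suml; apply: eq_bigr => i _; rewrite lie_brE. Qed.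

Lemma lie_sumr I (r : seq I) (P : pred I) (F : I -> 'rV[R]_n) m :
  lie_br c m (\sum_(i <- r | P i) F i) = \sum_(i <- r | P i) lie_br c m (F i).
Proof. by rewrite lie_brEr mulmx_suml; apply: eq_bigr => i _; rewrite lie_brEr. Qed.

Lemma lie0r m : lie_br c m 0 = 0.
Proof. by rewrite lie_brEr mul0mx. Qed.

Lemma ipC x y : ip B x y = ip B y x.
Proof.
rewrite /ip; transitivity ((x *m B *m y^T)^T 0 0); first by rewrite [RHS]mxE.
by rewrite !trmx_mul trmxK HBsym mulmxA.
Qed.

Lemma ipDr x y z : ip B z (x + y) = ip B z x + ip B z y.
Proof. by rewrite /ip linearD /= mulmxDr mxE. Qed.

Lemma ipZl a x z : ip B (a *: x) z = a * ip B x z.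
Proof. by rewrite /ip -!scalemxAl mxE. Qed.

Lemma ipZr a x z : ip B z (a *: x) = a * ip B z x.
Proof. by rewrite /ip linearZ /= -scalemxAr mxE. Qed.

Lemma ip0l z : ip B 0 z = 0.
Proof. by rewrite /ip !mul0mx mxE. Qed.

Lemma ip0r z : ip B z 0 = 0.
Proof. by rewrite /ip trmx0 mulmx0 mxE. Qed.

Lemma ip_sumr I (r : seq I) (P : pred I) (F : I -> 'rV[R]_n) z :
  ip B z (\sum_(i <- r | P i) F i) = \sum_(i <- r | P i) ip B z (F i).
Proof. by elim/big_rec2: _ => [|i y1 y2 _ <-]; [exact: ip0r | exact: ipDr]. Qed.

Lemma B_unitmx : B \in unitmx.
Proof. by apply: posdef_unitmx => x /HBpos. Qed.

Lemma ip_lie_skew m u v : ip B u (lie_br c m v) = - ip B v (lie_br c m u).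
Proof. by rewrite -HBinv Hanti -scaleN1r ipZl mulN1r ipC. Qed.

Lemma adr_skew w : adr w *m B = - (B *m (adr w)^T).
Proof.
apply: mx_form_inj => x z.
have := HBinv x w z; rewrite (Hanti z w) -scaleN1r ipZr mulN1r !lie_brE /ip.
by rewrite mulmxA => ->; rewrite trmx_mul mulmxN mulNmx !mulmxA [RHS]mxE.
Qed.

(* For [P] symmetric with respect to [B], [P *m adr w] is [B]-antisymmetric,
   hence traceless. *)
Lemma mxtrace_mul_adr (P : 'M[R]_n) w : P *m B = B *m P^T -> \tr (P *m adr w) = 0.
Proof.
move=> PB.
have : \tr (P *m adr w) = - \tr (P *m adr w).
  rewrite -{1}[adr w]mulmx1 -(mulmxV B_unitmx) !mulmxA -[P *m adr w *m B]mulmxA.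
  rewrite adr_skew mulmxN mulNmx linearN /= mulmxA PB mxtrace_mulC !mulmxA.
  by rewrite mulVmx ?B_unitmx // mul1mx -trmx_mul mxtrace_tr mxtrace_mulC.
by move=> tr_opp; lra.
Qed.

Lemma trace_lie_brl w : \sum_b (lie_br c (delta_mx 0 b : 'rV[R]_n) w) 0 b = 0.
Proof.
transitivity (\tr (1%:M *m adr w)).
  by rewrite mul1mx; apply: eq_bigr => b _; rewrite lie_brE -rowE mxE.
by rewrite mxtrace_mul_adr ?trmx1 ?mul1mx ?mulmx1.
Qed.

Lemma trace_lie_brr (P : 'M[R]_n) m : P *m B = B *m P^T ->
  \sum_b (lie_br c m ((delta_mx 0 b : 'rV[R]_n) *m P)) 0 b = 0.
Proof.
move=> PB; transitivity (- \tr (P *m adr m)); last by rewrite mxtrace_mul_adr ?oppr0.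
rewrite /mxtrace -sumrN; apply: eq_bigr => b _.
by rewrite Hanti lie_brE mxE -mulmxA -rowE mxE.
Qed.

End LieAlgebra.

Section LieDifferential.
Variables (R : realType) (n p q : nat) (c : 'I_n -> 'I_n -> 'I_n -> R) (B : 'M[R]_n).
Variable x : 'M[R]_(p, q).

Lemma mx_is_diff_lie (f df g dg : 'M[R]_(p, q) -> 'rV[R]_n) :
  mx_is_diff x f df -> mx_is_diff x g dg ->
  mx_is_diff x (fun y => lie_br c (f y) (g y))
    (fun v => lie_br c (df v) (g x) + lie_br c (f x) (dg v)).
Proof.
move=> dfx dgx i l.
have := is_diff_sum (index_enum 'I_n) (P := xpredT)
  (f := fun a y => \sum_b f y 0 a * g y 0 b * c a b l)
  (df := fun a v => \sum_b ((f x 0 a * g x 0 b) * 0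
            + c a b l * (f x 0 a * dg v 0 b + g x 0 b * df v 0 a)))
  (fun a _ => is_diff_sum (index_enum 'I_n) (P := xpredT)
      (f := fun b y => f y 0 a * g y 0 b * c a b l)
      (fun b _ => is_diffMp (is_diffMp (dfx 0 a) (dgx 0 b)) (is_diff_cstp x (c a b l)))).
apply: is_diff_ext => [y|v]; rewrite !mxE // -big_split /=.
by apply: eq_bigr => a _; rewrite -big_split /=; apply: eq_bigr => b _; ring.
Qed.

Lemma is_diff_ip (f df g dg : 'M[R]_(p, q) -> 'rV[R]_n) :
  mx_is_diff x f df -> mx_is_diff x g dg ->
  is_diff x (fun y => ip B (f y) (g y))
    (fun v => ip B (df v) (g x) + ip B (f x) (dg v)).
Proof.
move=> dfx dgx.
apply: is_diff_ext (mx_is_diffM (mx_is_diff_mulmxr B dfx) (mx_is_diff_tr dgx) 0 0) => //.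
by move=> v; rewrite mxE.
Qed.

End LieDifferential.

Section eLRField.
Variables (R : realType) (n k : nat) (c : 'I_n -> 'I_n -> 'I_n -> R).
Variables (B II : 'M[R]_n) (eps : R).
Hypothesis Hanti : forall x y : 'rV[R]_n, lie_br c y x = - lie_br c x y.
Hypothesis HBsym : B^T = B.
Hypothesis HBpos : forall x : 'rV[R]_n, x != 0 -> 0 < ip B x x.
Hypothesis HBinv : forall x y z : 'rV[R]_n,
  ip B (lie_br c x y) z = ip B x (lie_br c y z).
Hypothesis HIsym : forall x y : 'rV[R]_n, ip B (x *m II) y = ip B x (y *m II).
Hypothesis HIpos : forall x : 'rV[R]_n, x != 0 -> 0 < ip B (x *m II) x.

Local Notation V := 'M[R]_(k.+1, n).
Local Notation J := (invmx II).

Lemma II_unitmx : II \in unitmx.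
Proof.
have : II *m B \in unitmx by apply: posdef_unitmx => x /HIpos; rewrite /ip mulmxA.
by rewrite unitmx_mul => /andP[].
Qed.

Lemma JB : J *m B = B *m J^T.
Proof.
have IIB : II *m B = B *m II^T.
  by apply: mx_form_inj => x z; have := HIsym x z; rewrite /ip trmx_mul !mulmxA.
have IIJ : II^T *m J^T = 1%:M by rewrite -trmx_mul mulVmx ?II_unitmx // trmx1.
rewrite -[LHS]mulmx1 -IIJ !mulmxA -[J *m B *m II^T]mulmxA -IIB mulmxA.
by rewrite mulVmx ?II_unitmx // mul1mx.
Qed.

Lemma ipJ x y : ip B (x *m J) y = ip B x (y *m J).
Proof. by rewrite /ip trmx_mul -!mulmxA [J *m (B *m _)]mulmxA JB !mulmxA. Qed.

Definition omega (Y : V) := mpart Y *m J.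
Definition bracket (Y : V) := lie_br c (mpart Y) (omega Y).
Definition gram (Y : V) : 'M[R]_k :=
  \matrix_(i, j) ip B (epart Y i) (epart Y j *m J).
Definition lambda (Y : V) (i : 'I_k) :=
  - \sum_(j < k) ip B (epart Y j) (bracket Y *m J) * invmx (gram Y) i j.
Definition mdot (Y : V) := bracket Y + \sum_(i < k) lambda Y i *: epart Y i.
Definition edot (Y : V) (i : 'I_k) := eps *: lie_br c (epart Y i) (omega Y).

Lemma eLR_fieldE (Y : V) : eLR_field c B II eps Y =
  \matrix_(p, q) match unlift ord0 p with
                 | Some i => edot Y i 0 q
                 | None => mdot Y 0 q
                 end.
Proof. by []. Qed.

Lemma eLR_DeltaE (Y : V) : eLR_Delta B II Y = \det (gram Y).
Proof. by congr (\det _); apply/matrixP => i j; rewrite !mxE ipJ. Qed.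

Lemma invmx_gram_sym (Y : V) i j : invmx (gram Y) i j = invmx (gram Y) j i.
Proof.
have gram_tr : (gram Y)^T = gram Y.
  by apply/matrixP => i' j'; rewrite !mxE -ipJ ipC.
by rewrite -{1}gram_tr -trmx_inv mxE.
Qed.

Lemma gram_posdef (Y : V) : eLR_domain Y -> posdef (gram Y).
Proof.
rewrite /eLR_domain => E_free z z0.
set E := \matrix_(i < k, j < n) Y (lift ord0 i) j.
have eE i : epart Y i = row i E by apply/rowP => j; rewrite !mxE.
have u0 : z *m E != 0.
  by apply: contra z0 => /eqP zE0; apply/eqP/(row_free_inj E_free); rewrite mul0mx.
have -> : (z *m gram Y *m z^T) 0 0 = ip B (z *m E) (z *m E *m J).
  have -> : gram Y = E *m (B *m J^T) *m E^T.
    apply/matrixP => i j; rewrite [LHS]mxE !eE /ip rowE.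
    by rewrite trmx_mul !mulmxA -!mulmxA -form_delta !mulmxA rowE trmx_mul !mulmxA.
  by rewrite /ip !trmx_mul !mulmxA.
have uJI : z *m E *m J *m II = z *m E by rewrite -mulmxA mulVmx ?II_unitmx // mulmx1.
rewrite -{1}uJI; apply: HIpos; apply: contra u0 => /eqP uJ0.
by rewrite -uJI uJ0 mul0mx.
Qed.

Section AtPoint.
Variable X : V.
Hypothesis gram_unit : gram X \in unitmx.
Local Notation Z := (invmx (gram X)).

Definition d_bracket (v : V) :=
  lie_br c (mpart v) (omega X) + lie_br c (mpart X) (omega v).
Definition d_gram (v : V) : 'M[R]_k := \matrix_(i, j)
  (ip B (epart v i) (epart X j *m J) + ip B (epart X i) (epart v j *m J)).
Definition d_lambda (v : V) (i : 'I_k) := - \sum_(j < k)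
  ((ip B (epart v j) (bracket X *m J) + ip B (epart X j) (d_bracket v *m J)) * Z i j
   - ip B (epart X j) (bracket X *m J) * (Z *m d_gram v *m Z) i j).
Definition d_mdot (v : V) :=
  d_bracket v + \sum_(i < k) (lambda X i *: epart v i + d_lambda v i *: epart X i).
Definition d_edot (v : V) (i : 'I_k) :=
  eps *: (lie_br c (epart v i) (omega X) + lie_br c (epart X i) (omega v)).
Definition d_field (v : V) : V :=
  \matrix_(p, q) match unlift ord0 p with
                 | Some i => d_edot v i 0 q
                 | None => d_mdot v 0 q
                 end.

Lemma mx_is_diff_mpart : mx_is_diff X (@mpart R n k) (@mpart R n k).
Proof. exact: mx_is_diff_row (mx_is_diff_id X). Qed.

Lemma mx_is_diff_epart i : mx_is_diff X (epart^~ i) (epart^~ i).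
Proof. exact: mx_is_diff_row (mx_is_diff_id X). Qed.

Lemma mx_is_diff_omega : mx_is_diff X omega omega.
Proof. exact: mx_is_diff_mulmxr mx_is_diff_mpart. Qed.

Lemma mx_is_diff_bracket : mx_is_diff X bracket d_bracket.
Proof. exact: mx_is_diff_lie mx_is_diff_mpart mx_is_diff_omega. Qed.

Lemma mx_is_diff_gram : mx_is_diff X gram d_gram.
Proof.
apply: mx_is_diff_mx => i j.
exact: is_diff_ip (mx_is_diff_epart i) (mx_is_diff_mulmxr J (mx_is_diff_epart j)).
Qed.

Lemma is_diff_lambda i : is_diff X (lambda^~ i) (d_lambda^~ i).
Proof.
apply/is_diffNp/is_diff_sum => j _.
have := is_diffMp
  (is_diff_ip B (mx_is_diff_epart j) (mx_is_diff_mulmxr J mx_is_diff_bracket))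
  (mx_is_diff_inv mx_is_diff_gram gram_unit i j).
by apply: is_diff_ext => // v; rewrite mxE mulrN addrC mulrC [_ * Z i j]mulrC.
Qed.

Lemma mx_is_diff_mdot : mx_is_diff X mdot d_mdot.
Proof.
apply: mx_is_diffD mx_is_diff_bracket _.
apply: mx_is_diff_ext (mx_is_diff_sum (index_enum 'I_k) (P := xpredT)
  (f := fun i Y => lambda Y i *: epart Y i)
  (fun i _ => mx_is_diffZ (is_diff_lambda i) (mx_is_diff_epart i))) => //.
Qed.

Lemma mx_is_diff_edot i : mx_is_diff X (edot^~ i) (d_edot^~ i).
Proof.
have := mx_is_diffZ (is_diff_cstp X eps)
  (mx_is_diff_lie c (mx_is_diff_epart i) mx_is_diff_omega).
by apply: mx_is_diff_ext => // v; rewrite scale0r addr0.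
Qed.

Lemma mx_is_diff_field : mx_is_diff X (eLR_field c B II eps) d_field.
Proof.
apply: mx_is_diff_mx => a b; case: (unlift ord0 a) => [i|].
  exact: mx_is_diff_edot.
exact: mx_is_diff_mdot.
Qed.

Lemma mpart_delta0 b : mpart (delta_mx ord0 b : V) = delta_mx 0 b.
Proof. by apply/rowP => l; rewrite !mxE. Qed.

Lemma epart_delta0 b i : epart (delta_mx ord0 b : V) i = 0.
Proof. by apply/rowP => l; rewrite !mxE lift_eqF. Qed.

Lemma mpart_deltaS i b : mpart (delta_mx (lift ord0 i) b : V) = 0.
Proof. by apply/rowP => l; rewrite !mxE eq_sym lift_eqF. Qed.

Lemma epart_deltaS i b : epart (delta_mx (lift ord0 i) b : V) i = delta_mx 0 b.
Proof. by apply/rowP => l; rewrite !mxE eqxx. Qed.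

Definition flux := \sum_i \sum_j Z i j *
  ip B (epart X j) (lie_br c (epart X i) (omega X) *m J).

Lemma trace_d_field_e i :
  \sum_b d_field (delta_mx (lift ord0 i) b) (lift ord0 i) b = 0.
Proof.
transitivity (eps * \sum_b lie_br c (delta_mx 0 b) (omega X) 0 b).
  rewrite big_distrr; apply: eq_bigr => b _.
  by rewrite mxE liftK /d_edot /omega mpart_deltaS epart_deltaS mul0mx lie0r addr0 mxE.
by rewrite (trace_lie_brl Hanti HBpos HBinv) mulr0.
Qed.

Lemma trace_d_bracket0 : \sum_b d_bracket (delta_mx ord0 b) 0 b = 0.
Proof.
under eq_bigr do rewrite /d_bracket /omega mpart_delta0 mxE.
by rewrite big_split /= (trace_lie_brl Hanti HBpos HBinv)
  (trace_lie_brr Hanti HBpos HBinv _ JB) addr0.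
Qed.

Lemma d_lambda_delta0 b i : d_lambda (delta_mx ord0 b) i =
  - \sum_(j < k) Z i j * ip B (epart X j) (d_bracket (delta_mx ord0 b) *m J).
Proof.
have d_gram0 : d_gram (delta_mx ord0 b) = 0.
  by apply/matrixP => i' j; rewrite !mxE !epart_delta0 mul0mx ip0l ip0r addr0.
congr (- _); apply: eq_bigr => j _.
by rewrite d_gram0 mulmx0 mul0mx mxE mulr0 subr0 epart_delta0 ip0l add0r mulrC.
Qed.

Lemma sum_d_bracket0 i :
  \sum_b epart X i 0 b *: d_bracket (delta_mx ord0 b) =
  lie_br c (epart X i) (omega X) + lie_br c (mpart X) (epart X i *m J).
Proof.
rewrite [in RHS](row_sum_delta (epart X i)) lie_suml mulmx_suml lie_sumr -big_split /=.
apply: eq_bigr => b _; rewrite /d_bracket /omega mpart_delta0.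
by rewrite scalerDr lieZl -scalemxAl lieZr.
Qed.

Lemma trace_d_field_m : \sum_b d_field (delta_mx ord0 b) ord0 b =
  - \sum_i \sum_j Z i j * ip B (epart X j)
      ((lie_br c (epart X i) (omega X) + lie_br c (mpart X) (epart X i *m J)) *m J).
Proof.
transitivity (\sum_b d_bracket (delta_mx ord0 b) 0 b
   + \sum_b \sum_(i < k) d_lambda (delta_mx ord0 b) i * epart X i 0 b).
  rewrite -big_split; apply: eq_bigr => b _ /=.
  rewrite mxE unlift_none /d_mdot mxE summxE; congr (_ + _); apply: eq_bigr => i _.
  by rewrite epart_delta0 scaler0 add0r mxE.
rewrite trace_d_bracket0 add0r exchange_big -sumrN; apply: eq_bigr => i _ /=.
under eq_bigr do rewrite d_lambda_delta0 mulNr big_distrl /=.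
rewrite sumrN exchange_big /=; congr (- _); apply: eq_bigr => j _.
rewrite -sum_d_bracket0 mulmx_suml ip_sumr big_distrr; apply: eq_bigr => b _ /=.
by rewrite -scalemxAl ipZr; ring.
Qed.

(* Each summand is antisymmetric in [(i, j)] while [Z] is symmetric. *)
Lemma sum_lie_mpart_eq0 : \sum_i \sum_j Z i j *
  ip B (epart X j) (lie_br c (mpart X) (epart X i *m J) *m J) = 0.
Proof.
set t := fun i j => ip B (epart X j *m J) (lie_br c (mpart X) (epart X i *m J)).
have tE i j : ip B (epart X j) (lie_br c (mpart X) (epart X i *m J) *m J) = t i j.
  by rewrite /t ipJ.
have t_skew i j : t i j = - t j i by rewrite /t (ip_lie_skew Hanti HBsym HBinv).
set S := (LHS); have : S = - S.
  rewrite {1}/S; under eq_bigr do under eq_bigr do rewrite tE.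
  rewrite exchange_big /S -sumrN; apply: eq_bigr => i _.
  rewrite -sumrN; apply: eq_bigr => j _.
  by rewrite tE t_skew invmx_gram_sym mulrN.
by move=> S_opp; lra.
Qed.

Lemma lin_trace_d_field : lin_trace d_field = - flux.
Proof.
rewrite /lin_trace big_ord_recl trace_d_field_m.
under [X in _ + X]eq_bigr do rewrite trace_d_field_e.
rewrite big1_eq addr0.
congr (- _).
under eq_bigr do under eq_bigr do rewrite mulmxDl ipDr mulrDr.
under eq_bigr do rewrite big_split /=.
by rewrite big_split /= sum_lie_mpart_eq0 addr0.
Qed.

Lemma d_det_gram_field :
  \sum_i \sum_j d_gram (eLR_field c B II eps X) i j * cofactor (gram X) i j =
  2 * eps * \det (gram X) * flux.
Proof.
set L := fun i => lie_br c (epart X i) (omega X).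
set s := fun i j => ip B (epart X j) (L i *m J).
have epart_field i : epart (eLR_field c B II eps X) i = eps *: L i.
  by apply/rowP => l; rewrite /epart mxE eLR_fieldE mxE liftK.
have d_gramE i j : d_gram (eLR_field c B II eps X) i j = eps * (s i j + s j i).
  by rewrite mxE !epart_field -scalemxAl ipZl ipZr mulrDr -ipJ ipC.
transitivity (eps * \det (gram X) *
  (\sum_i \sum_j Z i j * s i j + \sum_i \sum_j Z j i * s j i)).
  rewrite -big_split /= big_distrr; apply: eq_bigr => i _ /=.
  rewrite -big_split /= big_distrr; apply: eq_bigr => j _ /=.
  by rewrite d_gramE cofactor_invmx // (invmx_gram_sym X j i); ring.
by rewrite [X in _ + X]exchange_big /=; rewrite /flux; ring.
Qed.

End AtPoint.

Hypothesis Heps : eps != 0.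

Lemma eLR_invariant_at (X : V) : eLR_domain X ->
  let mu Y := eLR_Delta B II Y `^ (1 / (2 * eps)) in
  differentiable (fun Y => mu Y *: eLR_field c B II eps Y) X /\
  divergence (fun Y => mu Y *: eLR_field c B II eps Y) X = 0.
Proof.
move=> X_dom mu; set r := 1 / (2 * eps).
have gram_pos := gram_posdef X_dom.
have gram_unit := posdef_unitmx gram_pos.
have D_gt0 := posdef_det_gt0 gram_pos.
have dmu : is_diff X mu (fun v => r * \det (gram X) `^ (r - 1) *
    \sum_i \sum_j d_gram X v i j * cofactor (gram X) i j).
  by apply: is_diff_ext (is_diff_powR r (is_diff_det (mx_is_diff_gram X)) D_gt0) => // Y;
    rewrite /mu eLR_DeltaE.
have dF := mx_is_diff_field gram_unit.
split; first exact: differentiable_mx (mx_is_diffZ dmu dF).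
rewrite (divergenceZ dmu dF) lin_trace_d_field d_det_gram_field // /mu eLR_DeltaE.
rewrite powRB ?powRr1 ?(ltW D_gt0) ?(lt0r_neq0 D_gt0) ?implybT // /r.
by field; rewrite (lt0r_neq0 D_gt0) Heps.
Qed.

End eLRField.

Theorem theorem1 (R : realType) (n k : nat)
  (c : 'I_n -> 'I_n -> 'I_n -> R) (B II : 'M[R]_n) (eps : R)
  (Hanti : forall x y : 'rV[R]_n, lie_br c y x = - lie_br c x y)
  (Hjac : forall x y z : 'rV[R]_n,
     lie_br c x (lie_br c y z) + lie_br c y (lie_br c z x)
     + lie_br c z (lie_br c x y) = 0)
  (HBsym : B^T = B)
  (HBpos : forall x : 'rV[R]_n, x != 0 -> 0 < ip B x x)
  (HBinv : forall x y z : 'rV[R]_n, ip B (lie_br c x y) z = ip B x (lie_br c y z))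
  (HIsym : forall x y : 'rV[R]_n, ip B (x *m II) y = ip B x (y *m II))
  (HIpos : forall x : 'rV[R]_n, x != 0 -> 0 < ip B (x *m II) x)
  (Hk : (1 <= k)%N) (Heps : eps != 0) :
  invariant_density [set X : 'M[R]_(k.+1, n) | eLR_domain X]
    (fun X : 'M[R]_(k.+1, n) => eLR_Delta B II X `^ (1 / (2 * eps)))
    (eLR_field c B II eps).
Proof.
move=> X X_dom.
exact: (eLR_invariant_at Hanti HBsym HBpos HBinv HIsym HIpos Heps X_dom).
Qed.
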